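(* For all integers $1\le t\le n$, the $t$-out-of-$n$ function $f_{t,n}:\{0,1\}^n\to\{0,1\}$, defined by $f_{t,n}(x)=1$ if $\sum_{i=1}^n x_i\ge t$ and $f_{t,n}(x)=0$ otherwise, has a quadratization using $\lceil n/2\rceil$ auxiliary variables.
   Context: A quadratization of $f:\{0,1\}^n\to\mathbb{R}$ using $m$ auxiliary variables is a polynomial $g(x,y)$ of degree at most $2$ in $x_1,\ldots,x_n,y_1,\ldots,y_m$ such that $f(x)=\min\{g(x,y):y\in\{0,1\}^m\}$ for all $x\in\{0,1\}^n$. *)

From Stdlib Require Import Reals Lra Lia Arith.
Open Scope R_scope.

Definition b2R (b : bool) : R := if b then 1 else 0.

Fixpoint rsum (N : nat) (f : nat -> R) : R :=
  match N with
  | O => 0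
  | S k => rsum k f + f k
  end.

Record quadpoly := QuadPoly {
  qc : R;
  qlin : nat -> R;
  qquad : nat -> nat -> R }.

Definition qeval (p : quadpoly) (N : nat) (z : nat -> R) : R :=
  qc p + rsum N (fun i => qlin p i * z i)
       + rsum N (fun i => rsum N (fun j => qquad p i j * z i * z j)).

(* Variables (x_1..x_n, y_1..y_m) are indexed 0..n-1 and n..n+m-1. *)
Definition joinvars (n : nat) (x y : nat -> bool) (i : nat) : R :=
  if Nat.ltb i n then b2R (x i) else b2R (y (i - n)%nat).

Definition geval (p : quadpoly) (n m : nat) (x y : nat -> bool) : R :=
  qeval p (n + m) (joinvars n x y).

(* f : {0,1}^n -> R (points of {0,1}^n are x : nat -> bool, using x 0..x (n-1)).
   g is a quadratization of f with m auxiliary variables iff for every x,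
   f x = min_{y in {0,1}^m} g(x,y), i.e. f x is a lower bound attained by some y. *)
Definition is_quadratization (n m : nat) (f : (nat -> bool) -> R) (p : quadpoly) : Prop :=
  forall x : nat -> bool,
    (forall y : nat -> bool, f x <= geval p n m x y) /\
    (exists y : nat -> bool, geval p n m x y = f x).

Definition has_quadratization (n m : nat) (f : (nat -> bool) -> R) : Prop :=
  exists p : quadpoly, is_quadratization n m f p.

Fixpoint count_ones (n : nat) (x : nat -> bool) : nat :=
  match n with
  | O => O
  | S k => (count_ones k x + (if x k then 1 else 0))%nat
  end.

Definition t_out_of_n (t n : nat) (x : nat -> bool) : R :=
  if Nat.leb t (count_ones n x) then 1 else 0.

(* With d = |x| - t and T(w) = w (w + 1) / 2, take
     g = T(d + 2s + 1) + T(2r - d) - T(-d) - 2 d z,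
   where s and r count the ones in two blocks of floor((t-1)/2) and
   floor((n-t)/2) auxiliary variables and z is one more auxiliary variable;
   T(w) is a product of affine forms, so g has degree 2.  On integers T is
   nonnegative, vanishes at 0 and -1, and is increasing from 0 on.  If d >= 0,
   then T(d + 2s + 1) - T(-d) >= T(d + 1) - T(-d) = 2d + 1 and -2dz >= -2d, so
   g >= 1, with equality for s = 0, z = 1 and 2r in {d - 1, d}.  If d < 0, then
   T(2r - d) >= T(-d) and -2dz >= 0, so g >= 0, with equality for r = 0, z = 0
   and d + 2s + 1 in {-1, 0}.  Altogether 1 + floor((t-1)/2) + floor((n-t)/2)
   <= ceil(n/2) auxiliary variables are used. *)

From Stdlib Require Import Reals Arith Lra Lia.
Open Scope R_scope.

Lemma half_split (a : nat) : a = (2 * (a / 2) + a mod 2)%nat /\ (a mod 2 < 2)%nat.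
Proof. split; [apply Nat.div_mod_eq | apply Nat.mod_upper_bound; lia]. Qed.

Lemma rsum_ext (N : nat) (f g : nat -> R) :
  (forall i, (i < N)%nat -> f i = g i) -> rsum N f = rsum N g.
Proof.
  induction N as [|N IH]; intros Hfg; simpl; [reflexivity|].
  rewrite IH, Hfg; [reflexivity | lia | intros i Hi; apply Hfg; lia].
Qed.

Lemma rsum_add (N : nat) (f g : nat -> R) :
  rsum N (fun i => f i + g i) = rsum N f + rsum N g.
Proof. induction N as [|N IH]; simpl; [ring | rewrite IH; ring]. Qed.

Lemma rsum_scal (N : nat) (c : R) (f : nat -> R) :
  rsum N (fun i => c * f i) = c * rsum N f.
Proof. induction N as [|N IH]; simpl; [ring | rewrite IH; ring]. Qed.

Lemma rsum_zero (N : nat) : rsum N (fun _ => 0) = 0.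
Proof. induction N as [|N IH]; simpl; [reflexivity | rewrite IH; ring]. Qed.

Lemma rsum_split (N M : nat) (f : nat -> R) :
  rsum (N + M) f = rsum N f + rsum M (fun j => f (N + j)%nat).
Proof.
  induction M as [|M IH]; simpl.
  - rewrite Nat.add_0_r; ring.
  - rewrite Nat.add_succ_r; simpl; rewrite IH; ring.
Qed.

Lemma rsum_mul_rsum (N : nat) (f g : nat -> R) :
  rsum N f * rsum N g = rsum N (fun i => rsum N (fun j => f i * g j)).
Proof.
  rewrite Rmult_comm, <- rsum_scal; apply rsum_ext; intros i _.
  rewrite Rmult_comm, <- rsum_scal; apply rsum_ext; intros j _; ring.
Qed.

Lemma rsum_prefix_indicator (N c : nat) :
  rsum N (fun k => if (k <? c)%nat then 1 else 0) = INR (Nat.min c N).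
Proof.
  induction N as [|N IH]; simpl; [now rewrite Nat.min_0_r|].
  rewrite IH; destruct (Nat.ltb_spec N c).
  - rewrite Nat.min_r, Nat.min_r, S_INR by lia; ring.
  - rewrite Nat.min_l, Nat.min_l by lia; ring.
Qed.

Lemma rsum_b2R_count_ones (n : nat) (x : nat -> bool) :
  rsum n (fun i => b2R (x i)) = INR (count_ones n x).
Proof.
  induction n as [|n IH]; simpl; [reflexivity|].
  rewrite IH, plus_INR; destruct (x n); simpl; ring.
Qed.

Lemma b2R_bounds (b : bool) : 0 <= b2R b <= 1.
Proof. destruct b; simpl; lra. Qed.

Definition block_sum (a len : nat) (z : nat -> R) : R := rsum len (fun k => z (a + k)%nat).

Lemma block_sum_one (a : nat) (z : nat -> R) : block_sum a 1 z = z a.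
Proof. unfold block_sum; simpl; rewrite Nat.add_0_r; ring. Qed.

Lemma block_sum_b2R (a len : nat) (y : nat -> bool) :
  block_sum a len (fun j => b2R (y j)) = INR (count_ones len (fun k => y (a + k)%nat)).
Proof. apply rsum_b2R_count_ones. Qed.

Lemma block_sum_prefix (a len c : nat) (z : nat -> R) :
  (c <= len)%nat ->
  (forall k, (k < len)%nat -> z (a + k)%nat = if (k <? c)%nat then 1 else 0) ->
  block_sum a len z = INR c.
Proof.
  intros Hc Hz; unfold block_sum.
  rewrite (rsum_ext _ _ _ Hz), rsum_prefix_indicator, Nat.min_l by exact Hc.
  reflexivity.
Qed.

Lemma joinvars_low (n : nat) (x y : nat -> bool) (i : nat) :
  (i < n)%nat -> joinvars n x y i = b2R (x i).
Proof. intros Hi; unfold joinvars; destruct (Nat.ltb_spec i n); [reflexivity | lia]. Qed.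

Lemma joinvars_high (n : nat) (x y : nat -> bool) (j : nat) :
  joinvars n x y (n + j) = b2R (y j).
Proof.
  unfold joinvars; destruct (Nat.ltb_spec (n + j) n); [lia|].
  now replace (n + j - n)%nat with j by lia.
Qed.

Lemma block_sum_joinvars_low (n : nat) (x y : nat -> bool) :
  block_sum 0 n (joinvars n x y) = INR (count_ones n x).
Proof.
  rewrite <- rsum_b2R_count_ones; apply rsum_ext; intros i Hi.
  apply joinvars_low; exact Hi.
Qed.

Lemma block_sum_joinvars_high (n a len : nat) (x y : nat -> bool) :
  block_sum (n + a) len (joinvars n x y) = block_sum a len (fun j => b2R (y j)).
Proof.
  apply rsum_ext; intros k _.
  rewrite <- Nat.add_assoc; apply joinvars_high.
Qed.

Definition affine (N : nat) (F : (nat -> R) -> R) : Prop :=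
  exists (c : R) (u : nat -> R), forall z, F z = c + rsum N (fun i => u i * z i).

Definition quadratic (N : nat) (F : (nat -> R) -> R) : Prop :=
  exists p : quadpoly, forall z, qeval p N z = F z.

Lemma affine_const (N : nat) (c : R) : affine N (fun _ => c).
Proof.
  exists c, (fun _ => 0); intros z.
  rewrite (rsum_ext _ _ (fun _ => 0)), rsum_zero by (intros; ring); ring.
Qed.

Lemma affine_add (N : nat) (F G : (nat -> R) -> R) :
  affine N F -> affine N G -> affine N (fun z => F z + G z).
Proof.
  intros (c & u & HF) (d & v & HG).
  exists (c + d), (fun i => u i + v i); intros z.
  rewrite HF, HG.
  rewrite (rsum_ext N (fun i => (u i + v i) * z i) (fun i => u i * z i + v i * z i)),
    rsum_add by (intros; ring).
  ring.
Qed.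

Lemma affine_scal (N : nat) (a : R) (F : (nat -> R) -> R) :
  affine N F -> affine N (fun z => a * F z).
Proof.
  intros (c & u & HF); exists (a * c), (fun i => a * u i); intros z.
  rewrite HF, (rsum_ext N (fun i => a * u i * z i) (fun i => a * (u i * z i))), rsum_scal
    by (intros; ring).
  ring.
Qed.

Lemma affine_block_sum (N a len : nat) :
  (a + len <= N)%nat -> affine N (block_sum a len).
Proof.
  intros Hblock.
  exists 0, (fun i => if andb (a <=? i)%nat (i <? a + len)%nat then 1 else 0); intros z.
  replace N with (a + (len + (N - a - len)))%nat by lia.
  rewrite !rsum_split.
  rewrite (rsum_ext a _ (fun _ => 0)), (rsum_ext (N - a - len) _ (fun _ => 0)), !rsum_zero.
  - unfold block_sum; rewrite Rplus_0_l, Rplus_0_r, Rplus_0_l.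
    apply rsum_ext; intros k Hk.
    destruct (Nat.leb_spec a (a + k)), (Nat.ltb_spec (a + k) (a + len)); simpl; [ring | lia..].
  - intros k _; destruct (Nat.ltb_spec (a + (len + k)) (a + len));
      [lia | rewrite Bool.andb_false_r; ring].
  - intros i Hi; destruct (Nat.leb_spec a i); [lia | simpl; ring].
Qed.

Lemma affine_var (N p : nat) : (p < N)%nat -> affine N (fun z => z p).
Proof.
  intros Hp; destruct (affine_block_sum N p 1) as (c & u & H); [lia|].
  exists c, u; intros z; rewrite <- H, block_sum_one; reflexivity.
Qed.

Lemma quadratic_add (N : nat) (F G : (nat -> R) -> R) :
  quadratic N F -> quadratic N G -> quadratic N (fun z => F z + G z).
Proof.
  intros [p HF] [q HG].
  exists (QuadPoly (qc p + qc q) (fun i => qlin p i + qlin q i)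
            (fun i j => qquad p i j + qquad q i j)); intros z.
  rewrite <- HF, <- HG; unfold qeval; simpl.
  rewrite (rsum_ext N (fun i => (qlin p i + qlin q i) * z i)
             (fun i => qlin p i * z i + qlin q i * z i)), rsum_add by (intros; ring).
  rewrite (rsum_ext N (fun i => rsum N (fun j => (qquad p i j + qquad q i j) * z i * z j))
             (fun i => rsum N (fun j => qquad p i j * z i * z j)
                     + rsum N (fun j => qquad q i j * z i * z j))), rsum_add.
  - ring.
  - intros i _; rewrite <- rsum_add; apply rsum_ext; intros; ring.
Qed.

Lemma quadratic_mul_affine (N : nat) (F G : (nat -> R) -> R) :
  affine N F -> affine N G -> quadratic N (fun z => F z * G z).
Proof.
  intros (c & u & HF) (d & v & HG).
  exists (QuadPoly (c * d) (fun i => c * v i + d * u i) (fun i j => u i * v j)); intros z.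
  rewrite HF, HG; unfold qeval; simpl.
  rewrite (rsum_ext N (fun i => (c * v i + d * u i) * z i)
             (fun i => c * (v i * z i) + d * (u i * z i))), rsum_add, !rsum_scal
    by (intros; ring).
  rewrite (rsum_ext N (fun i => rsum N (fun j => u i * v j * z i * z j))
             (fun i => rsum N (fun j => (u i * z i) * (v j * z j)))), <- rsum_mul_rsum.
  - ring.
  - intros i _; apply rsum_ext; intros; ring.
Qed.

Lemma quadratic_ext (N : nat) (F G : (nat -> R) -> R) :
  quadratic N F -> (forall z, F z = G z) -> quadratic N G.
Proof. intros [p Hp] HFG; exists p; intros z; rewrite Hp; apply HFG. Qed.

Definition tri (w : R) : R := w * (w + 1) / 2.

Lemma tri_nonneg (w : R) : 0 <= w \/ w <= -1 -> 0 <= tri w.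
Proof. unfold tri; intros [Hw | Hw]; nra. Qed.

Lemma tri_nat_diff_nonneg (a b : nat) : 0 <= tri (INR a - INR b).
Proof.
  apply tri_nonneg; destruct (le_lt_dec b a) as [Hba | Hab].
  - left; apply le_INR in Hba; lra.
  - right; apply le_INR in Hab; rewrite S_INR in Hab; lra.
Qed.

Lemma tri_le (w w' : R) : -1/2 <= w <= w' -> tri w <= tri w'.
Proof. unfold tri; intros Hw; nra. Qed.

Definition objective (d s r zeta : R) : R :=
  tri (d + 2 * s + 1) + tri (2 * r - d) - tri (- d) - 2 * d * zeta.

Lemma quadratic_objective (N : nat) (d s r zeta : (nat -> R) -> R) :
  affine N d -> affine N s -> affine N r -> affine N zeta ->
  quadratic N (fun z => objective (d z) (s z) (r z) (zeta z)).
Proof.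
  intros Hd Hs Hr Hzeta.
  apply (quadratic_ext N (fun z =>
      (/2 * (d z + 2 * s z + 1)) * (d z + 2 * s z + 1 + 1)
    + (/2 * (2 * r z + -1 * d z)) * (2 * r z + -1 * d z + 1)
    + (/2 * d z) * (1 + -1 * d z)
    + (-2 * d z) * zeta z)).
  - repeat apply quadratic_add; apply quadratic_mul_affine;
      repeat first [assumption | apply affine_add | apply affine_scal | apply affine_const].
  - intros z; unfold objective, tri; field.
Qed.

Lemma objective_lower_bound (k t s r : nat) (zeta : R) :
  0 <= zeta <= 1 ->
  (if (t <=? k)%nat then 1 else 0) <= objective (INR k - INR t) (INR s) (INR r) zeta.
Proof.
  intros Hzeta; unfold objective.
  pose proof (pos_INR s); pose proof (pos_INR r).
  destruct (Nat.leb_spec t k) as [Htk | Hkt].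
  - apply le_INR in Htk.
    assert (Hleft : tri (INR k - INR t + 1) <= tri (INR k - INR t + 2 * INR s + 1))
      by (apply tri_le; lra).
    assert (Hright : 0 <= tri (2 * INR r - (INR k - INR t))).
    { replace (2 * INR r - (INR k - INR t)) with (INR (2 * r + t) - INR k)
        by (rewrite plus_INR, mult_INR; simpl; ring).
      apply tri_nat_diff_nonneg. }
    assert (Hstep : tri (INR k - INR t + 1) - tri (- (INR k - INR t)) = 2 * (INR k - INR t) + 1)
      by (unfold tri; field).
    assert (Hzeta_term : (INR k - INR t) * zeta <= INR k - INR t) by nra.
    lra.
  - apply le_INR in Hkt; rewrite S_INR in Hkt.
    assert (Hleft : 0 <= tri (INR k - INR t + 2 * INR s + 1)).
    { replace (INR k - INR t + 2 * INR s + 1) with (INR (k + 2 * s + 1) - INR t)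
        by (rewrite !plus_INR, mult_INR; simpl; ring).
      apply tri_nat_diff_nonneg. }
    assert (Hright : tri (- (INR k - INR t)) <= tri (2 * INR r - (INR k - INR t)))
      by (apply tri_le; lra).
    assert (Hzeta_term : (INR k - INR t) * zeta <= 0) by nra.
    lra.
Qed.

Lemma objective_attained (k t : nat) :
  exists (s r : nat) (zeta : bool),
    (2 * s <= t - 1)%nat /\ (2 * r <= k - t)%nat /\
    objective (INR k - INR t) (INR s) (INR r) (b2R zeta) = (if (t <=? k)%nat then 1 else 0).
Proof.
  destruct (Nat.leb_spec t k) as [Htk | Hkt].
  - destruct (half_split (k - t)) as [Hsplit Hrem].
    exists 0%nat, ((k - t) / 2)%nat, true; split; [lia | split; [lia |]].
    assert (Hk : k = (t + 2 * ((k - t) / 2) + (k - t) mod 2)%nat) by lia.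
    rewrite Hk at 1; rewrite !plus_INR, mult_INR.
    destruct ((k - t) mod 2)%nat as [|[|e]]; [| | lia]; unfold objective, tri; simpl; field.
  - destruct (half_split (t - 1 - k)) as [Hsplit Hrem].
    exists ((t - 1 - k) / 2)%nat, 0%nat, false; split; [lia | split; [lia |]].
    assert (Ht : t = (k + 2 * ((t - 1 - k) / 2) + (t - 1 - k) mod 2 + 1)%nat) by lia.
    rewrite Ht at 1; rewrite !plus_INR, mult_INR.
    destruct ((t - 1 - k) mod 2)%nat as [|[|e]]; [| | lia]; unfold objective, tri; simpl; field.
Qed.

Definition threshold_gadget (n ls lr t : nat) (z : nat -> R) : R :=
  objective (block_sum 0 n z - INR t) (block_sum n ls z) (block_sum (n + ls) lr z)
    (z (n + ls + lr)%nat).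

Lemma quadratic_threshold_gadget (n m ls lr t : nat) :
  (ls + lr + 1 <= m)%nat -> quadratic (n + m) (threshold_gadget n ls lr t).
Proof.
  intros Hlayout; apply quadratic_objective.
  - apply affine_add; [apply affine_block_sum; lia | apply affine_const].
  - apply affine_block_sum; lia.
  - apply affine_block_sum; lia.
  - apply affine_var; lia.
Qed.

Lemma threshold_gadget_joinvars (n ls lr t : nat) (x y : nat -> bool) :
  threshold_gadget n ls lr t (joinvars n x y) =
  objective (INR (count_ones n x) - INR t) (block_sum 0 ls (fun j => b2R (y j)))
    (block_sum ls lr (fun j => b2R (y j))) (b2R (y (ls + lr)%nat)).
Proof.
  unfold threshold_gadget; f_equal.
  - rewrite block_sum_joinvars_low; reflexivity.
  - rewrite <- (block_sum_joinvars_high n 0 ls x y), Nat.add_0_r; reflexivity.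
  - apply block_sum_joinvars_high.
  - rewrite <- Nat.add_assoc; apply joinvars_high.
Qed.

Definition aux_assignment (ls lr s r : nat) (zeta : bool) (j : nat) : bool :=
  if (j <? ls)%nat then (j <? s)%nat
  else if (j <? ls + lr)%nat then (j - ls <? r)%nat
  else zeta.

Lemma aux_assignment_blocks (ls lr s r : nat) (zeta : bool) :
  (s <= ls)%nat -> (r <= lr)%nat ->
  let yb := fun j => b2R (aux_assignment ls lr s r zeta j) in
  block_sum 0 ls yb = INR s /\ block_sum ls lr yb = INR r /\ yb (ls + lr)%nat = b2R zeta.
Proof.
  intros Hs Hr yb; unfold yb, aux_assignment; repeat split.
  - apply block_sum_prefix; [exact Hs | intros k Hk].
    destruct (Nat.ltb_spec (0 + k) ls), (Nat.ltb_spec (0 + k) s), (Nat.ltb_spec k s);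
      simpl; reflexivity || lia.
  - apply block_sum_prefix; [exact Hr | intros k Hk].
    replace (ls + k - ls)%nat with k by lia.
    destruct (Nat.ltb_spec (ls + k) ls), (Nat.ltb_spec (ls + k) (ls + lr)), (Nat.ltb_spec k r);
      simpl; reflexivity || lia.
  - destruct (Nat.ltb_spec (ls + lr) ls), (Nat.ltb_spec (ls + lr) (ls + lr)); [lia.. | reflexivity].
Qed.

Lemma count_ones_le (n : nat) (x : nat -> bool) : (count_ones n x <= n)%nat.
Proof. induction n as [|n IH]; simpl; [lia | destruct (x n); lia]. Qed.

Theorem corollary3 (t n : nat) (Ht : (1 <= t)%nat) (Htn : (t <= n)%nat) :
  has_quadratization n ((n + 1) / 2)%nat (t_out_of_n t n).
Proof.
  set (ls := ((t - 1) / 2)%nat); set (lr := ((n - t) / 2)%nat).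
  assert (Hlayout : (ls + lr + 1 <= (n + 1) / 2)%nat).
  { destruct (half_split (t - 1)), (half_split (n - t)), (half_split (n + 1)).
    unfold ls, lr; lia. }
  destruct (quadratic_threshold_gadget n _ ls lr t Hlayout) as [p Hp].
  exists p; intros x; unfold geval, t_out_of_n; split.
  - intros y; rewrite Hp, threshold_gadget_joinvars, !block_sum_b2R.
    apply objective_lower_bound, b2R_bounds.
  - destruct (objective_attained (count_ones n x) t) as (s & r & zeta & Hs & Hr & Hval).
    pose proof (count_ones_le n x).
    destruct (aux_assignment_blocks ls lr s r zeta) as (HL & HR & Hzeta).
    + apply Nat.div_le_lower_bound; lia.
    + apply Nat.div_le_lower_bound; lia.
    + exists (aux_assignment ls lr s r zeta).
      rewrite Hp, threshold_gadget_joinvars, HL, HR, Hzeta; exact Hval.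
Qed.
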